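(* Assume Hypothesis C, and fix a hypothesis $H\in\{\mathrm{RN},\mathrm{RA},\mathrm{RS}\}$ among those satisfied. Run the Optimizer; it assigns labels $1,\dots,n-1$ to some states. Extend this to a labeling $L$ of $N\cup\{0\}$ by giving the remaining states of $N$ the labels $n,\dots,|N|$ in an arbitrary way and $L(0)=|N|+1$. Then the priority rule $\pi$ keyed to $L$ is optimal: $V^{\pi}(s)=F(s)$ for every multi-state $s\in S$.
   Context: There are $K$ bandits with pairwise disjoint finite nonempty state sets $N_1,\dots,N_K$; $N=N_1\cup\dots\cup N_K$; $b(j)$ is the $k$ with $j\in N_k$. Bandit $k$ has real transition rates $q(i,j)$ ($i,j\in N_k$) forming $q^k$ and real rewards $r(i)$ forming $r^k$. A multi-state $s$ contains exactly one state $s_k$ of each $N_k$; $S$ is the set of multi-states; $s_{\setminus k}=s\setminus\{s_k\}$. A stationary nonrandomized policy is a map $\delta:S\to\{1,\dots,K\}$; $\Delta$ is the set of these. $Q^{\delta}(s,t)=q(s_{\delta(s)},j)$ if $t=s_{\setminus\delta(s)}\cup\{j\}$ with $j\in N_{\delta(s)}$, else $0$; $R^{\delta}(s)=r(s_{\delta(s)})$; $V^{\delta}=(I-Q^{\delta})^{-1}R^{\delta}$; $F(s)=\max_{\delta\in\Delta}V^{\delta}(s)$. A matrix is transient if its powers tend to $0$ entrywise. Hypothesis C: each $q^k$ is entrywise nonnegative and transient, and at least one of: (RN) each $q^k$ is substochastic; (RA) $r(i)\le0$ for all $i\in N$; (RS) $r(i)\ge0$ for all $i\in N$. A labeling is an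 injective $L:N\cup\{0\}\to\{1,\dots,|N|+1\}$ with $L(0)=|N|+1$; the priority rule keyed to $L$ is $\pi(s)=\arg\min_k L(s_k)$. Current data: each bandit $k$ carries a tableau $[(I-q),r]$ (initially $[(I-q^k),r^k]$) defining current values $q(j,p)$, $r(j)$; the amplification is $a(j)=\sum_{p\in N_{b(j)}}q(j,p)$. Categories and weak preference (depending on $H$): Under RN: category 1 if $a(j)=1,r(j)\ge0$; category 2 if $a(j)<1$; category 3 if $a(j)=1,r(j)<0$. Under RA: category 1 if $r(j)=0,a(j)\le1$; category 2 if $r(j)<0$; category 3 if $r(j)=0,a(j)>1$. Under RS: category 1 if $r(j)=0,a(j)\ge1$; category 2 if $r(j)>0$; category 3 if $r(j)=0,a(j)<1$. State $i$ is weakly preferable to state $j$ (possibly in different bandits, each evaluated with its current data) if $r(i)+a(i)r(j)>r(j)+a(j)r(i)$, or equality holds and the category of $i$ is $\le$ that of $j$. This relation is a total preorder. Revision step for state $i\in M_k$ (where $k=b(i)$): multiply row $i$ of bandit $k$'s tableau by $1/[1-q(i,i)]$; then for each $j\in M_k\setminus\{i\}$ replace row $j$ by itself plus $q(j,i)$ (current value) times the updated row $i$. Optimizer: (1) Set $M_k=N_k$ for each $k$; let $C$ consist of, for each bandit $k$, one state of $N_k$ weakly preferable to every other state of $N_k$ (original data); set $n=1$. (2) While $M_k\ne\emptyset$ for every $k$: choose $i\in C$ weakly preferable to all other states of $C$ (current data); set $k=b(i)$, $L(i)=n$, $n\leftarrow n+1$; (a) apply the revision step for $i$ on bandit $k$;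 (b) remove $i$ from $C$ and from $M_k$, and if $M_k\ne\emptyset$ insert into $C$ a state of $M_k$ weakly preferable to all other states of $M_k$ with respect to the updated data. The Optimizer stops as soon as some $M_k$ is empty. *)

From HB Require Import structures.
From mathcomp Require Import all_boot all_order all_algebra.
Set Implicit Arguments. Unset Strict Implicit. Unset Printing Implicit Defensive.
Import Order.TTheory GRing.Theory Num.Theory.
Local Open Scope ring_scope.

Inductive hyp := RN | RA | RS.

Definition mstate (K : nat) (T : finType) (b : T -> 'I_K) :=
  {s : {ffun 'I_K -> T} | [forall k, b (s k) == k]}.
HB.instance Definition _ K T b := Finite.on (@mstate K T b).

Section Bandits.
Variables (R : realFieldType) (K : nat) (T : finType) (b : T -> 'I_K).
(* T is N = N_1 u ... u N_K; b j is the bandit of j; N_k = [pred j | b j == k].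
   q : T -> T -> R, only its values q i j with b i = b j are used (q^k is the
   restriction of q to N_k x N_k);  r : T -> R the rewards. *)

Fixpoint powon (P : pred T) (A : T -> T -> R) (n : nat) : T -> T -> R :=
  match n with
  | 0 => fun i j => (i == j)%:R
  | n'.+1 => fun i j => \sum_(l | P l) powon P A n' i l * A l j
  end.

Definition transient_on (P : pred T) (A : T -> T -> R) : Prop :=
  forall i j, P i -> P j -> forall eps : R, 0 < eps ->
    exists N : nat, forall n : nat, (N <= n)%N -> `|powon P A n i j| < eps.

Definition bandit (k : 'I_K) : pred T := [pred j | b j == k].

Variables (q : T -> T -> R) (r : T -> R).

Definition hyp_holds (H : hyp) : Prop :=
  match H with
  | RN => forall i, \sum_(j | b j == b i) q i j <= 1
  | RA => forall i, r i <= 0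
  | RS => forall i, 0 <= r i
  end.

(* Hypothesis C: each q^k entrywise nonnegative and transient
   (the chosen H with hyp_holds H is a separate hypothesis of the theorem) *)
Definition hypC_base : Prop :=
  (forall i j, b i = b j -> 0 <= q i j) /\ (forall k, transient_on (bandit k) q).

Local Notation mstate := (@mstate K T b).
Definition policy := {ffun mstate -> 'I_K}.

(* Q^delta(s,t): t = s \ {s_k} u {j}, j in N_k, k = delta s *)
Definition Qfun (d : policy) (s t : mstate) : R :=
  let k := d s in
  if [forall k', (k' != k) ==> (val t k' == val s k')]
  then q (val s k) (val t k) else 0.

Definition Qmx (d : policy) : 'M[R]_#|{: mstate}| :=
  \matrix_(i, j) Qfun d (enum_val i : mstate) (enum_val j : mstate).

Definition Rvec (d : policy) : 'cV[R]_#|{: mstate}| :=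
  \col_i (let s : mstate := enum_val i in r (val s (d s))).

Definition Vmx (d : policy) : 'cV[R]_#|{: mstate}| :=
  invmx (1%:M - Qmx d) *m Rvec d.

Definition V (d : policy) (s : mstate) : R := Vmx d (enum_rank s) 0.

Definition F (s : mstate) : R :=
  match enum {: policy} with
  | [::] => 0
  | d :: ds => foldr Num.max (V d s) [seq V d' s | d' <- ds]
  end.

(* None stands for the state 0 *)
Definition labeling (L : option T -> nat) : Prop :=
  [/\ injective L, forall x, (1 <= L x <= #|T|.+1)%N & L None = #|T|.+1].

Definition priority_rule (L : option T -> nat) (d : policy) : Prop :=
  forall (s : mstate) (k : 'I_K), (L (Some (val s (d s))) <= L (Some (val s k)))%N.

End Bandits.

Section Optimizer.
Variables (R : realFieldType) (K : nat) (T : finType) (b : T -> 'I_K).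
Variables (q : T -> T -> R) (r : T -> R) (H : hyp).

(* the tableau: Atab j p is the (j,p) entry of (I - q), rtab j of r *)
Definition qcur (Atab : T -> T -> R) (j p : T) : R := (j == p)%:R - Atab j p.

Definition amp (Atab : T -> T -> R) (j : T) : R :=
  \sum_(p | b p == b j) qcur Atab j p.

Definition category (Atab : T -> T -> R) (rtab : T -> R) (j : T) : nat :=
  let a := amp Atab j in
  let rj := rtab j in
  match H with
  | RN => if a == 1 then (if 0 <= rj then 1%N else 3%N) else 2%N
  | RA => if rj == 0 then (if a <= 1 then 1%N else 3%N) else 2%N
  | RS => if rj == 0 then (if 1 <= a then 1%N else 3%N) else 2%N
  end.

Definition wpref (Atab : T -> T -> R) (rtab : T -> R) (i j : T) : bool :=
  let lhs := rtab i + amp Atab i * rtab j in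
  let rhs := rtab j + amp Atab j * rtab i in
  (rhs < lhs) ||
  ((lhs == rhs) && (category Atab rtab i <= category Atab rtab j)%N).

Definition A0 : T -> T -> R :=
  fun j p => if b j == b p then (j == p)%:R - q j p else 0.

(* revision step for state i, M the current set of unlabeled states *)
Definition reviseA (Atab : T -> T -> R) (M : {set T}) (i : T) : T -> T -> R :=
  fun j p =>
    if j == i then Atab i p * (1 - qcur Atab i i)^-1
    else if (j \in M) && (b j == b i)
    then Atab j p + qcur Atab j i * (Atab i p * (1 - qcur Atab i i)^-1)
    else Atab j p.

Definition reviser (Atab : T -> T -> R) (rtab : T -> R) (M : {set T}) (i : T)
  : T -> R :=
  fun j =>
    if j == i then rtab i * (1 - qcur Atab i i)^-1
    else if (j \in M) && (b j == b i)
    then rtab j + qcur Atab j i * (rtab i * (1 - qcur Atab i i)^-1)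
    else rtab j.

Definition init_C (C : {set T}) : Prop :=
  forall k : 'I_K, exists i, [/\ b i = k,
    [set j in C | b j == k] = [set i]
    & forall j, b j = k -> j != i -> wpref A0 r i j].

(* reachable configurations (tableau, rtab, M, C, labeled states in order);
   all nondeterministic tie-breaking choices are allowed *)
Inductive opt_reach : (T -> T -> R) -> (T -> R) -> {set T} -> {set T} -> seq T -> Prop :=
| opt_init C : init_C C -> opt_reach A0 r setT C [::]
| opt_step Atab rtab M C lab i C' :
    opt_reach Atab rtab M C lab ->
    (forall k : 'I_K, exists j, j \in M /\ b j = k) ->
    i \in C ->
    (forall j, j \in C -> j != i -> wpref Atab rtab i j) ->
    (let A' := reviseA Atab M i in
     let r' := reviser Atab rtab M i in
     let M' := M :\ i in
     ((~ exists j, j \in M' /\ b j = b i) /\ C' = C :\ i) \/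
     (exists i', [/\ i' \in M', b i' = b i,
        (forall j, j \in M' -> b j = b i -> j != i' -> wpref A' r' i' j)
        & C' = i' |: (C :\ i)])) ->
    opt_reach (reviseA Atab M i) (reviser Atab rtab M i) (M :\ i) C' (rcons lab i).

Definition opt_final (M : {set T}) : Prop :=
  exists k : 'I_K, forall j, b j = k -> j \notin M.

End Optimizer.

From HB Require Import structures.
From mathcomp Require Import all_boot all_order all_algebra.
From mathcomp Require Import ring lra.
Set Implicit Arguments. Unset Strict Implicit. Unset Printing Implicit Defensive.
Import Order.TTheory GRing.Theory Num.Theory.
Local Open Scope ring_scope.

(* Transience of each [q^k] yields a positive weight [w] with [q w < w] on every
   bandit; its product over the bandits is strictly excessive for every policy,
   which gives a maximum principle: any [U] with [U >= R^d + Q^d U] dominates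
   [V^d], with equality for a fixpoint.  It therefore suffices to solve the
   optimality equation [U = max_k (r + q U)] with the maximum attained by [pi].
   This is done backwards along the run of the Optimizer.  When some [M_k] is
   empty no multi-state remains and there is nothing to solve.  The revision
   step for [i] is Gaussian elimination of [i], so a solution of the reduced
   problem extends to the problem before it through one step of the revised
   recursion at the multi-states containing [i].  There, engaging [i] is
   optimal: [i] is weakly preferable to the current best state of every other
   bandit, weak preference is transitive (the preference gap is a 2x2
   determinant), and the gain of engaging [i] first is a positive multiple of
   that gap.  Finally [pi] engages [i] there, since [i] carries the smallest
   label among the remaining states. *)

Section Preference.
Variable R : realFieldType.
Implicit Types (H : hyp) (ai ri aj rj : R).

(* [category] and [wpref] of the Optimizer, as functions of the pair
   (amplification, reward). *)
Definition pref_cat H (a r : R) : nat :=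
  match H with
  | RN => if a == 1 then (if 0 <= r then 1%N else 3%N) else 2%N
  | RA => if r == 0 then (if a <= 1 then 1%N else 3%N) else 2%N
  | RS => if r == 0 then (if 1 <= a then 1%N else 3%N) else 2%N
  end.

Definition admissible H (a r : R) : Prop :=
  match H with RN => a <= 1 | RA => r <= 0 | RS => 0 <= r end.

Definition pref_gap ai ri aj rj := ri + ai * rj - (rj + aj * ri).

Definition pref H ai ri aj rj : bool :=
  (rj + aj * ri < ri + ai * rj) ||
  ((ri + ai * rj == rj + aj * ri) && (pref_cat H ai ri <= pref_cat H aj rj)%N).

Ltac case_pref_cat :=
  repeat (case: ifP => /= ?);
  repeat match goal with
  | h : (_ == _) = true |- _ => move/eqP: h => h
  | h : (_ == _) = false |- _ => move/negbT: h => h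
  | h : (?x <= ?y) = false |- _ => move/negbT: h; rewrite -ltNge => h
  | h : (?x <= ?y) = true |- _ => change (is_true (x <= y)) in h
  end;
  repeat match goal with h : _ != _ |- _ => move: h; rewrite neq_lt => /orP[] ? end.

Lemma pref_gap_ge0_of_cat_lt H ai ri aj rj :
  admissible H ai ri -> admissible H aj rj ->
  (pref_cat H ai ri < pref_cat H aj rj)%N -> 0 <= pref_gap ai ri aj rj.
Proof. rewrite /pref_gap; case: H => /= hi hj; case_pref_cat => //; subst; nra. Qed.

Lemma pref_gap0_of_cat_eq H ai ri aj rj :
  admissible H ai ri -> admissible H aj rj ->
  pref_cat H ai ri = pref_cat H aj rj -> pref_cat H ai ri != 2%N ->
  pref_gap ai ri aj rj = 0.
Proof. rewrite /pref_gap; case: H => /= hi hj; case_pref_cat => //; subst; nra. Qed.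

Lemma pref_gap_ge0 H ai ri aj rj : pref H ai ri aj rj -> 0 <= pref_gap ai ri aj rj.
Proof. by rewrite /pref /pref_gap => /orP[|/andP[/eqP ? _]]; lra. Qed.

Lemma pref_cat_le H ai ri aj rj : admissible H ai ri -> admissible H aj rj ->
  pref H ai ri aj rj -> (pref_cat H ai ri <= pref_cat H aj rj)%N.
Proof.
move=> hi hj /orP[gt|/andP[_ //]]; rewrite leqNgt; apply/negP => lt.
by have := pref_gap_ge0_of_cat_lt hj hi lt; rewrite /pref_gap; lra.
Qed.

(* [pref_gap ai ri aj rj] is the determinant of the vectors [(ri, 1 - ai)] and
   [(rj, 1 - aj)]; this is the Grassmann-Plücker relation for a linear form
   evaluated on three such vectors. *)
Lemma pref_gap_plucker (l m ai ri at_ rt aj rj : R) :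
  (l * rt + m * (1 - at_)) * pref_gap ai ri aj rj =
  (l * rj + m * (1 - aj)) * pref_gap ai ri at_ rt +
  (l * ri + m * (1 - ai)) * pref_gap at_ rt aj rj.
Proof. rewrite /pref_gap; ring. Qed.

Definition cat2_weight H (a r : R) : R :=
  match H with RN => 1 - a | RA => - r | RS => r end.

Lemma cat2_weight_gt0 H a r : admissible H a r -> pref_cat H a r = 2%N ->
  0 < cat2_weight H a r.
Proof. case: H => /= h; case_pref_cat => // _; lra. Qed.

Lemma pref_gap_trans_cat2 H ai ri at_ rt aj rj :
  admissible H ai ri -> admissible H at_ rt -> admissible H aj rj ->
  pref_cat H ai ri = 2%N -> pref_cat H at_ rt = 2%N -> pref_cat H aj rj = 2%N ->
  0 <= pref_gap ai ri at_ rt -> 0 <= pref_gap at_ rt aj rj ->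
  0 <= pref_gap ai ri aj rj.
Proof.
move=> hi ht hj ci ct cj git gtj.
have wi := cat2_weight_gt0 hi ci; have wt := cat2_weight_gt0 ht ct.
have wj := cat2_weight_gt0 hj cj.
have [l [m wE]] : exists l m, forall a r, cat2_weight H a r = l * r + m * (1 - a).
  by case: H {hi ht hj ci ct cj wi wt wj}; [exists 0, 1 | exists (-1), 0 | exists 1, 0];
    move=> a r /=; ring.
rewrite -(pmulr_rge0 _ wt) !wE pref_gap_plucker -!wE.
by rewrite addr_ge0 // mulr_ge0 // ltW.
Qed.

Lemma pref_gap_trans H ai ri at_ rt aj rj :
  admissible H ai ri -> admissible H at_ rt -> admissible H aj rj ->
  pref H ai ri at_ rt -> pref H at_ rt aj rj -> 0 <= pref_gap ai ri aj rj.
Proof.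
move=> hi ht hj pit ptj.
have cit := pref_cat_le hi ht pit; have ctj := pref_cat_le ht hj ptj.
have [lt|ge] := ltnP (pref_cat H ai ri) (pref_cat H aj rj).
  exact: pref_gap_ge0_of_cat_lt lt.
have cij : pref_cat H ai ri = pref_cat H aj rj.
  by apply/eqP; rewrite eqn_leq ge (leq_trans cit ctj).
have cit' : pref_cat H ai ri = pref_cat H at_ rt.
  by apply/eqP; rewrite eqn_leq cit cij ctj.
have [c2|c2] := eqVneq (pref_cat H ai ri) 2%N; last first.
  by rewrite (pref_gap0_of_cat_eq hi hj cij c2).
apply: (pref_gap_trans_cat2 hi ht hj) => //; rewrite -?cit' -?cij //.
  exact: pref_gap_ge0 pit.
exact: pref_gap_ge0 ptj.
Qed.

End Preference.

Section MultiStates.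
Variables (R : realFieldType) (K : nat) (T : finType) (b : T -> 'I_K).
Local Notation mstate := (mstate b).
Implicit Types (s t : mstate) (k : 'I_K) (j p : T).

Lemma mstate_bandit s k : b (val s k) = k.
Proof. exact/eqP/(forallP (valP s)). Qed.

Lemma mstateP s t : (forall k, val s k = val t k) -> s = t.
Proof. by move=> h; apply/val_inj/ffunP. Qed.

(* A no-op unless [j] belongs to bandit [k]. *)
Definition mupd s k j : mstate :=
  insubd s [ffun k' => if k' == k then j else val s k'].

Lemma mupdE s k j : b j = k ->
  val (mupd s k j) = [ffun k' => if k' == k then j else val s k'].
Proof.
move=> bj; rewrite val_insubd; case: ifP => // /negP []; apply/forallP => k'.
by rewrite ffunE; case: (k' =P k) => [->|_]; rewrite ?bj ?mstate_bandit.
Qed.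

Lemma mupd_at s k j : b j = k -> val (mupd s k j) k = j.
Proof. by move=> bj; rewrite mupdE // ffunE eqxx. Qed.

Lemma mupd_other s k j k' : b j = k -> k' != k -> val (mupd s k j) k' = val s k'.
Proof. by move=> bj nk; rewrite mupdE // ffunE (negPf nk). Qed.

Lemma mupd_outside s k j : b j != k -> mupd s k j = s.
Proof.
move=> bj; apply: val_inj; rewrite val_insubd; case: ifP => // /forallP /(_ k).
by rewrite ffunE eqxx (negPf bj).
Qed.

Lemma mupd_id s k : mupd s k (val s k) = s.
Proof.
apply: mstateP => k'; have [->|nk] := eqVneq k' k.
  by rewrite mupd_at ?mstate_bandit.
by rewrite mupd_other ?mstate_bandit.
Qed.

Lemma mupd_mupd s k j p : b p = k -> mupd (mupd s k j) k p = mupd s k p.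
Proof.
move=> bp; apply: mstateP => k'; have [->|nk] := eqVneq k' k; first by rewrite !mupd_at.
have [bj|bj] := eqVneq (b j) k; last by rewrite (mupd_outside _ bj).
by rewrite !mupd_other.
Qed.

Lemma mupdC s k j k' p : k != k' -> b j = k -> b p = k' ->
  mupd (mupd s k j) k' p = mupd (mupd s k' p) k j.
Proof.
move=> nk bj bp; apply: mstateP => k''.
have [->|n1] := eqVneq k'' k; first by rewrite mupd_other // !mupd_at.
have [->|n2] := eqVneq k'' k'; first by rewrite mupd_at // mupd_other 1?eq_sym // mupd_at.
by rewrite !mupd_other.
Qed.

Variable q : T -> T -> R.

Lemma Qfun_sumE (d : policy b) s (f : mstate -> R) :
  \sum_t Qfun q d s t * f t =
  \sum_(j | b j == d s) q (val s (d s)) j * f (mupd s (d s) j).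
Proof.
set k := d s.
under eq_bigr => t _ do rewrite /Qfun -/k (fun_if (fun x => x * f t)) mul0r.
rewrite -big_mkcond /= (reindex_onto (mupd s k) (fun t : mstate => val t k)); last first.
  move=> t /forallP ht; apply: mstateP => k'.
  have [->|nk] := eqVneq k' k; first by rewrite mupd_at ?mstate_bandit.
  by rewrite mupd_other ?mstate_bandit //; have := ht k'; rewrite nk => /eqP.
apply: eq_big => j; last by move=> /andP[_ /eqP ->].
have [bj|bj] := eqVneq (b j) k.
  rewrite mupd_at // eqxx andbT; apply/forallP => k'; apply/implyP => nk.
  by rewrite mupd_other.
rewrite mupd_outside //; apply/negbTE/nandP; right.
by apply: contra bj => /eqP <-; rewrite mstate_bandit.
Qed.

End MultiStates.

Section MaximumPrinciple.
Variables (R : realFieldType) (K : nat) (T : finType) (b : T -> 'I_K).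
Variables (q : T -> T -> R) (w : T -> R).
Local Notation mstate := (mstate b).
Implicit Types (s t : mstate).
Hypothesis q_ge0 : forall i j, b i = b j -> 0 <= q i j.
Hypothesis w_gt0 : forall i, 0 < w i.
Hypothesis w_excessive : forall i, \sum_(j | b j == b i) q i j * w j < w i.

Definition mweight (s : mstate) : R := \prod_(k < K) w (val s k).

Lemma mweight_gt0 s : 0 < mweight s.
Proof. by apply: prodr_gt0 => k _; apply: w_gt0. Qed.

Lemma mweight_mupd s k j : b j = k ->
  mweight (mupd s k j) = w j * \prod_(k' | k' != k) w (val s k').
Proof.
move=> bj; rewrite /mweight (bigD1 k) //= mupd_at //; congr (_ * _).
by apply: eq_bigr => k' nk; rewrite mupd_other.
Qed.

Lemma Qfun_ge0 (d : policy b) s t : 0 <= Qfun q d s t.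
Proof. by rewrite /Qfun; case: ifP => // _; apply: q_ge0; rewrite !mstate_bandit. Qed.

Lemma Qfun_mweight_lt (d : policy b) s : \sum_t Qfun q d s t * mweight t < mweight s.
Proof.
rewrite Qfun_sumE; set k := d s.
under eq_bigr => j /eqP bj do rewrite mweight_mupd // mulrA.
rewrite -big_distrl /= [X in _ < X](bigD1 k) //= ltr_pM2r.
  by have := w_excessive (val s k); rewrite mstate_bandit.
by apply: prodr_gt0 => k' _; apply: w_gt0.
Qed.

(* Maximum principle: at a state minimising [X / mweight], a negative minimum
   would contradict [Q X <= X] because [mweight] is strictly excessive. *)
Lemma Qfun_super_ge0 (d : policy b) (X : mstate -> R) :
  (forall s, \sum_t Qfun q d s t * X t <= X s) -> forall s, 0 <= X s.
Proof.
move=> X_super s.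
have [s0 _ s0_min] := arg_minP (fun t => X t / mweight t) (isT : predT s).
set m := X s0 / mweight s0 in s0_min.
have X_ge t : m * mweight t <= X t by rewrite -ler_pdivlMr ?mweight_gt0 ?s0_min.
have [m_ge0|m_lt0] := lerP 0 m.
  by apply: le_trans (X_ge s); rewrite mulr_ge0 // ltW ?mweight_gt0.
have Xs0 : X s0 = m * mweight s0 by rewrite /m divfK // gt_eqF ?mweight_gt0.
have QX_ge : m * (\sum_t Qfun q d s0 t * mweight t) <= \sum_t Qfun q d s0 t * X t.
  rewrite mulr_sumr; apply: ler_sum => t _.
  by rewrite mulrCA; apply: ler_wpM2l; [apply: Qfun_ge0 | apply: X_ge].
have : m * mweight s0 < m * \sum_t Qfun q d s0 t * mweight t.
  by rewrite ltr_nM2l // Qfun_mweight_lt.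
by have := X_super s0; rewrite Xs0; lra.
Qed.

Lemma IQ_rowE (d : policy b) s (Y : mstate -> R) :
  \sum_(j < #|{: mstate}|) (1%:M - Qmx q d) (enum_rank s) j * Y (enum_val j) =
  Y s - \sum_t Qfun q d s t * Y t.
Proof.
rewrite (reindex (@enum_rank _)) /=; last exact/onW_bij/enum_rank_bij.
under eq_bigr => t _ do rewrite !mxE enum_rankK mulrBl.
rewrite sumrB; congr (_ - _); last by apply: eq_bigr => t _; rewrite enum_rankK.
rewrite (bigD1 s) //= eqxx mul1r enum_rankK big1 ?addr0 // => t nt.
by rewrite (inj_eq enum_rank_inj) eq_sym (negPf nt) mul0r.
Qed.

Lemma IQ_unitmx (d : policy b) : (1%:M - Qmx q d) \in unitmx.
Proof.
rewrite unitmxE unitfE -det_tr; apply/negP => /det0P [v v_neq0 v_ker].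
pose x (t : mstate) := v 0 (enum_rank t).
have x_fix s : x s - \sum_t Qfun q d s t * x t = 0.
  rewrite -IQ_rowE; move/matrixP: v_ker => /(_ 0 (enum_rank s)).
  rewrite !mxE => e; rewrite -[RHS]e; apply: eq_bigr => j _.
  by rewrite !mxE /x enum_valK mulrC.
have x0 s : x s = 0.
  apply/eqP; rewrite eq_le; apply/andP; split; last first.
    by apply: (Qfun_super_ge0 (X := x)) => t; have := x_fix t; lra.
  rewrite -oppr_ge0; apply: (Qfun_super_ge0 (d := d) (X := fun t => - x t)) => t.
  under eq_bigr => u _ do rewrite mulrN.
  by rewrite sumrN; have := x_fix t; lra.
move/negP: v_neq0; apply; apply/eqP/matrixP => i j.
by rewrite mxE (ord1 i) -(enum_valK j) [LHS]x0.
Qed.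

Variable r : T -> R.

Lemma V_bellman (d : policy b) s :
  V q r d s = r (val s (d s)) + \sum_t Qfun q d s t * V q r d t.
Proof.
have : (1%:M - Qmx q d) *m Vmx q r d = Rvec r d.
  by rewrite /Vmx mulmxA mulmxV ?IQ_unitmx // mul1mx.
move/matrixP => /(_ (enum_rank s) 0); rewrite !mxE enum_rankK.
have -> : \sum_j (1%:M - Qmx q d) (enum_rank s) j * Vmx q r d j 0 =
    \sum_j (1%:M - Qmx q d) (enum_rank s) j * V q r d (enum_val j).
  by apply: eq_bigr => j _; rewrite /V enum_valK.
by rewrite IQ_rowE /= => <-; rewrite subrK.
Qed.

Lemma V_le_super (d : policy b) (U : mstate -> R) :
  (forall s, r (val s (d s)) + \sum_t Qfun q d s t * U t <= U s) ->
  forall s, V q r d s <= U s.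
Proof.
move=> U_super s; rewrite -subr_ge0.
apply: (Qfun_super_ge0 (d := d) (X := fun t => U t - V q r d t)) => t.
under eq_bigr => u _ do rewrite mulrBr.
by rewrite sumrB; have := U_super t; have := V_bellman d t; lra.
Qed.

Lemma V_fixpoint (d : policy b) (U : mstate -> R) :
  (forall s, U s = r (val s (d s)) + \sum_t Qfun q d s t * U t) ->
  forall s, V q r d s = U s.
Proof.
move=> U_fix s; apply/eqP; rewrite eq_le V_le_super /= => [|t]; last by rewrite -U_fix.
rewrite -subr_ge0; apply: (Qfun_super_ge0 (d := d) (X := fun t => V q r d t - U t)) => t.
under eq_bigr => u _ do rewrite mulrBr.
by rewrite sumrB; have := U_fix t; have := V_bellman d t; lra.
Qed.

End MaximumPrinciple.

Lemma foldr_max_ge (R : realDomainType) (x : R) l y :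
  y \in x :: l -> y <= foldr Num.max x l.
Proof.
elim: l y => [|z l IH] y; first by rewrite inE => /eqP ->.
rewrite /= !inE le_max => /or3P[/eqP ->|/eqP ->|yl].
- by rewrite (IH x) ?mem_head ?orbT.
- by rewrite lexx.
- by rewrite (IH y) ?orbT // in_cons yl orbT.
Qed.

Lemma foldr_max_mem (R : realDomainType) (x : R) l : foldr Num.max x l \in x :: l.
Proof.
elim: l => [|z l IH] /=; first by rewrite mem_head.
rewrite maxEle; case: ifP => _; last by rewrite !in_cons eqxx orbT.
by move: IH; rewrite !in_cons => /orP[->|->]; rewrite ?orbT.
Qed.

Section OptimalValue.
Variables (R : realFieldType) (K : nat) (T : finType) (b : T -> 'I_K).
Variables (q : T -> T -> R) (r : T -> R).

Lemma V_le_F (d : policy b) (s : mstate b) : V q r d s <= F q r s.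
Proof.
rewrite /F; case E: (enum {: policy b}) => [|d0 ds].
  by have := mem_enum {: policy b} d; rewrite E.
apply: foldr_max_ge; rewrite -[_ :: _]/(map (fun d' => V q r d' s) (d0 :: ds)) -E.
by apply: map_f; rewrite mem_enum.
Qed.

Lemma F_attained (d0 : policy b) (s : mstate b) :
  exists d : policy b, F q r s = V q r d s.
Proof.
rewrite /F; case E: (enum {: policy b}) => [|d1 ds].
  by have := mem_enum {: policy b} d0; rewrite E.
have := foldr_max_mem (V q r d1 s) [seq V q r d' s | d' <- ds].
by rewrite -[_ :: _]/(map (fun d' => V q r d' s) (d1 :: ds)) => /mapP[d _ ->]; exists d.
Qed.

End OptimalValue.

Lemma ex_uniform_threshold (A : finType) (P : A -> nat -> Prop) :
  (forall a N N', P a N -> (N <= N')%N -> P a N') ->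
  (forall a, exists N, P a N) -> exists N, forall a, P a N.
Proof.
move=> P_mono P_ex.
suff [N PN] : exists N, forall a, a \in enum A -> P a N.
  by exists N => a; apply: PN; rewrite mem_enum.
elim: (enum A) => [|x X [N PN]]; first by exists 0%N.
have [Nx Px] := P_ex x.
exists (maxn Nx N) => a; rewrite in_cons => /orP[/eqP ->|aX].
  by apply: P_mono Px _; rewrite leq_maxl.
by apply: P_mono (PN _ aX) _; rewrite leq_maxr.
Qed.

Section Transience.
Variables (R : realFieldType) (T : finType) (P : pred T) (A : T -> T -> R).
Hypothesis A_ge0 : forall i j, P i -> P j -> 0 <= A i j.

Lemma powon_ge0 n i j : P j -> 0 <= powon P A n i j.
Proof.
elim: n j => [|n IH] j Pj /=; first by rewrite ler0n.
by apply: sumr_ge0 => l Pl; rewrite mulr_ge0 ?IH ?A_ge0.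
Qed.

Lemma powonSl n i l : P i -> P l ->
  \sum_(p | P p) A i p * powon P A n p l = powon P A n.+1 i l.
Proof.
move=> Pi; elim: n l => [|n IH] l Pl /=.
  rewrite (bigD1 l) //= eqxx mulr1 big1 ?addr0 => [|p /andP[_ /negPf ->]]; last first.
    by rewrite mulr0.
  rewrite (bigD1 i) //= eqxx mul1r big1 ?addr0 // => p /andP[_ pi].
  by rewrite eq_sym (negPf pi) mul0r.
under eq_bigr => p _ do rewrite big_distrr /=.
rewrite exchange_big /=; apply: eq_bigr => m Pm.
have /= <- := IH m Pm.
by rewrite big_distrl /=; apply: eq_bigr => p _; rewrite mulrA.
Qed.

Definition trunc_green (N : nat) (i : T) : R :=
  \sum_(m < N.+1) \sum_(l | P l) powon P A m i l.

Lemma powon0_rowsum i : P i -> \sum_(l | P l) powon P A 0 i l = 1.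
Proof.
move=> Pi; rewrite (bigD1 i) //= eqxx big1 ?addr0 // => l /andP[_].
by rewrite eq_sym => /negPf ->.
Qed.

Lemma trunc_green_gt0 N i : P i -> 0 < trunc_green N i.
Proof.
move=> Pi; rewrite /trunc_green big_ord_recl powon0_rowsum // ltr_wpDr //.
by apply: sumr_ge0 => m _; apply: sumr_ge0 => l Pl; apply: powon_ge0.
Qed.

Lemma trunc_green_excessive N i : P i ->
  \sum_(l | P l) powon P A N.+1 i l < 1 ->
  \sum_(j | P j) A i j * trunc_green N j < trunc_green N i.
Proof.
move=> Pi small.
have -> : \sum_(j | P j) A i j * trunc_green N j =
          \sum_(m < N.+1) \sum_(l | P l) powon P A m.+1 i l.
  under eq_bigr => j _ do rewrite /trunc_green big_distrr /=.
  rewrite exchange_big /=; apply: eq_bigr => m _.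
  under eq_bigr => j _ do rewrite big_distrr /=.
  by rewrite exchange_big /=; apply: eq_bigr => l Pl; apply: powonSl.
pose S m := \sum_(l | P l) powon P A m i l.
have e1 : \sum_(m < N.+2) S m = S 0%N + \sum_(m < N.+1) S m.+1 by apply: big_ord_recl.
have e2 : \sum_(m < N.+2) S m = trunc_green N i + S N.+1 by apply: big_ord_recr.
by rewrite /S powon0_rowsum // in e1; rewrite /S in e2 small *; lra.
Qed.

End Transience.

Lemma hypC_excessive_weight (R : realFieldType) (K : nat) (T : finType)
    (b : T -> 'I_K) (q : T -> T -> R) :
  hypC_base b q -> exists w : T -> R,
    (forall i, 0 < w i) /\ (forall i, \sum_(j | b j == b i) q i j * w j < w i).
Proof.
move=> [q_ge0 q_tr].
set eps : R := (#|T|%:R + 1)^-1.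
have eps_gt0 : 0 < eps by rewrite invr_gt0 ltr_wpDl.
have [N small] : exists N, forall ij : T * T, b ij.1 = b ij.2 ->
    forall n, (N <= n)%N -> `|powon (bandit b (b ij.1)) q n ij.1 ij.2| < eps.
  apply: ex_uniform_threshold => [ij N N' PN le bij n|[i j]] /=.
    by move=> Nn; apply: PN => //; apply: leq_trans Nn.
  have [bij|nbij] := eqVneq (b i) (b j); last by exists 0%N => /eqP; rewrite (negPf nbij).
  by have [N hN] := q_tr (b i) i j (eqxx _) (introT eqP (esym bij)) eps eps_gt0; exists N.
have bandit_ge0 k i j : bandit b k i -> bandit b k j -> 0 <= q i j.
  by move=> /eqP bi /eqP bj; apply: q_ge0; rewrite bi bj.
exists (fun i => trunc_green (bandit b (b i)) q N i); split => [i|i].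
  by apply: (trunc_green_gt0 (bandit_ge0 (b i))); apply: eqxx.
rewrite (eq_bigr (fun j => q i j * trunc_green (bandit b (b i)) q N j)); last first.
  by move=> j /eqP ->.
change (\sum_(j | bandit b (b i) j) q i j * trunc_green (bandit b (b i)) q N j <
        trunc_green (bandit b (b i)) q N i).
apply: (trunc_green_excessive (P := bandit b (b i))); first exact: eqxx.
apply: (@le_lt_trans _ _ (\sum_(l : T) eps)); last first.
  rewrite sumr_const -mulr_natl /eps ltr_pdivrMr ?ltr_wpDl //; lra.
rewrite [leRHS](bigID (bandit b (b i))) /= ler_wpDr ?sumr_ge0 // => [l _|].
  exact: ltW.
apply: ler_sum => l /eqP bl; apply/ltW/(le_lt_trans (ler_norm _)).
exact: (small (i, l) (esym bl) N.+1 (leqnSn N)).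
Qed.

Section Revision.
Variables (R : realFieldType) (K : nat) (T : finType) (b : T -> 'I_K).
Variables (A : T -> T -> R) (rt : T -> R) (M : {set T}) (i : T).
Local Notation qc := (@qcur R T).
Local Notation A' := (reviseA b A M i).
Local Notation r' := (reviser b A rt M i).
Hypothesis qc_ii_lt1 : qc A i i < 1.
Let d := (1 - qc A i i)^-1.

Lemma revise_pivot_gt0 : 0 < d.
Proof. by rewrite invr_gt0 subr_gt0. Qed.

Lemma revise_pivotK : d * (1 - qc A i i) = 1.
Proof. by rewrite mulVf // subr_eq0 eq_sym lt_eqF. Qed.

Lemma revise_pivot_diag : A i i * d = 1.
Proof.
have := revise_pivotK; rewrite mulrC => <-.
by congr (_ * _); rewrite /qcur eqxx /=; ring.
Qed.

Lemma reviseA_pivot p : p != i -> qc A' i p = qc A i p * d.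
Proof. by move=> pi; rewrite /qcur /reviseA eqxx [i == p]eq_sym (negPf pi) !sub0r mulNr. Qed.

Lemma reviseA_row j p : j != i -> j \in M -> b j = b i ->
  qc A' j p = qc A j p - qc A j i * (A i p * d).
Proof.
by move=> ji jM bj; rewrite [LHS]/qcur /reviseA (negPf ji) jM bj eqxx /= /d /qcur; ring.
Qed.

Lemma reviseA_elim j p : j != i -> j \in M -> b j = b i -> p != i ->
  qc A' j p = qc A j p + qc A j i * qc A' i p.
Proof.
move=> ji jM bj pi; rewrite reviseA_row // reviseA_pivot //.
have -> : A i p = - qc A i p by rewrite /qcur [i == p]eq_sym (negPf pi) sub0r opprK.
ring.
Qed.

Lemma reviseA_col0 j : j != i -> j \in M -> b j = b i -> qc A' j i = 0.
Proof. by move=> ji jM bj; rewrite reviseA_row // revise_pivot_diag mulr1 subrr. Qed.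

Lemma reviseA_other j p : j != i -> ~~ ((j \in M) && (b j == b i)) -> qc A' j p = qc A j p.
Proof. by move=> ji h; rewrite /qcur /reviseA (negPf ji) (negPf h). Qed.

Lemma reviser_pivot : r' i = rt i * d.
Proof. by rewrite /reviser eqxx. Qed.

Lemma reviser_row j : j != i -> j \in M -> b j = b i -> r' j = rt j + qc A j i * r' i.
Proof. by move=> ji jM bj; rewrite /reviser eqxx (negPf ji) jM bj eqxx. Qed.

Lemma reviser_other j : j != i -> ~~ ((j \in M) && (b j == b i)) -> r' j = rt j.
Proof. by move=> ji h; rewrite /reviser (negPf ji) (negPf h). Qed.

Lemma amp_reviseA_other_bandit x : b x != b i -> amp b A' x = amp b A x.
Proof.
move=> bx; have xi : x != i by apply: contraNneq bx => ->.
by apply: eq_bigr => p _; rewrite reviseA_other // (negPf bx) andbF.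
Qed.

Lemma reviser_other_bandit x : b x != b i -> r' x = rt x.
Proof.
move=> bx; have xi : x != i by apply: contraNneq bx => ->.
by rewrite reviser_other // (negPf bx) andbF.
Qed.

Lemma amp_reviseA_row j : j != i -> j \in M -> b j = b i ->
  amp b A' j = amp b A j - qc A j i * d * (1 - amp b A i).
Proof.
move=> ji jM bj; rewrite /amp bj.
have -> : 1 - \sum_(p | b p == b i) qc A i p = \sum_(p | b p == b i) A i p.
  rewrite (bigD1 i) //= [RHS](bigD1 i) //= /qcur eqxx opprD addrA.
  rewrite [X in _ = _ + X](eq_bigr (fun p => - ((i == p)%:R - A i p))).
    by rewrite sumrN /=; ring.
  by move=> p /andP[_ pi]; rewrite eq_sym (negPf pi) /=; ring.
by rewrite mulr_sumr -sumrB; apply: eq_bigr => p _; rewrite reviseA_row //; ring.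
Qed.

End Revision.

Lemma qcur_A0 (R : realFieldType) (K : nat) (T : finType) (b : T -> 'I_K)
    (q : T -> T -> R) j p :
  b j = b p -> qcur (A0 b q) j p = q j p.
Proof. by move=> bjp; rewrite /qcur /A0 bjp eqxx; ring. Qed.

Section BanditSums.
Variables (R : realFieldType) (K : nat) (T : finType) (b : T -> 'I_K).

Lemma bandit_sumD1 (M : {set T}) i (f : T -> R) : i \in M ->
  \sum_(p | (p \in M) && (b p == b i)) f p =
  f i + \sum_(p | (p \in M :\ i) && (b p == b i)) f p.
Proof.
move=> iM; rewrite (bigD1 i) /=; last by rewrite iM eqxx.
congr (_ + _); apply: eq_bigl => p; rewrite in_setD1.
by case: (p \in M); case: (p == i); case: (b p == b i).
Qed.

Lemma bandit_sum_setD1 (M : {set T}) i k (f : T -> R) : k != b i ->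
  \sum_(p | (p \in M :\ i) && (b p == k)) f p = \sum_(p | (p \in M) && (b p == k)) f p.
Proof.
move=> ki; apply: eq_bigl => p; rewrite in_setD1.
by have [->|//] := eqVneq p i; rewrite /= [b i == k]eq_sym (negPf ki) andbF.
Qed.

End BanditSums.

Section OptimizerInvariant.
Variables (R : realFieldType) (K : nat) (T : finType) (b : T -> 'I_K).
Variables (q : T -> T -> R) (r : T -> R) (H : hyp) (w : T -> R).
Hypothesis w_gt0 : forall i, 0 < w i.
Local Notation qc := (@qcur R T).

(* [w] is a strictly excessive weight for the original tableau; [inv_excessive]
   keeps [qc A i i < 1], so that every revision step is well defined. *)
Record opt_inv (A : T -> T -> R) (rt : T -> R) (M C : {set T}) (lab : seq T) : Prop := {
  inv_ge0 : forall j p, j \in M -> p \in M -> b j = b p -> 0 <= qc A j p;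
  inv_out0 : forall j p, j \in M -> p \notin M -> b p = b j -> qc A j p = 0;
  inv_excessive : forall j, j \in M ->
    \sum_(p | (p \in M) && (b p == b j)) qc A j p * w p < w j;
  inv_admissible : forall j, j \in M -> admissible H (amp b A j) (rt j);
  inv_best : forall k, (exists j, j \in M /\ b j = k) -> exists t, [/\ t \in C, b t = k &
    forall j, j \in M -> b j = k -> j != t -> wpref b H A rt t j];
  inv_CM : {subset C <= M};
  inv_lab : forall x, x \in lab -> x \notin M;
  inv_uniq : uniq lab }.

Definition next_C (A : T -> T -> R) (rt : T -> R) (M C : {set T}) (i : T) (C' : {set T}) :=
  let A' := reviseA b A M i in let r' := reviser b A rt M i in let M' := M :\ i in
  ((~ exists j, j \in M' /\ b j = b i) /\ C' = C :\ i) \/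
  (exists i', [/\ i' \in M', b i' = b i,
     (forall j, j \in M' -> b j = b i -> j != i' -> wpref b H A' r' i' j)
     & C' = i' |: (C :\ i)]).

Lemma wprefE (A : T -> T -> R) (rt : T -> R) i j :
  wpref b H A rt i j = pref H (amp b A i) (rt i) (amp b A j) (rt j).
Proof. by []. Qed.

Section Invariant.
Variables (A : T -> T -> R) (rt : T -> R) (M C : {set T}) (lab : seq T).
Hypothesis I : opt_inv A rt M C lab.

Lemma inv_ampE j : j \in M -> amp b A j = \sum_(p | (p \in M) && (b p == b j)) qc A j p.
Proof.
move=> jM; rewrite /amp (bigID (mem M)) /= [X in _ + X]big1 ?addr0.
  by apply: eq_bigl => p; rewrite andbC.
by move=> p /andP[/eqP bp pM]; apply: (inv_out0 I).
Qed.

Lemma inv_diag_lt1 i : i \in M -> qc A i i < 1.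
Proof.
move=> iM; have := inv_excessive I iM; rewrite bandit_sumD1 //.
have : 0 <= \sum_(p | (p \in M :\ i) && (b p == b i)) qc A i p * w p.
  apply: sumr_ge0 => p /andP[]; rewrite in_setD1 => /andP[_ pM] /eqP bp.
  by rewrite mulr_ge0 ?(inv_ge0 I iM pM (esym bp)) ?ltW.
move=> S_ge0 lt; rewrite -(ltr_pM2r (w_gt0 i)) mul1r; lra.
Qed.

Section Step.
Variables (i : T) (C' : {set T}).
Hypotheses (iC : i \in C) (C'_next : next_C A rt M C i C').
Let iM : i \in M := inv_CM I iC.
Let qc_ii_lt1 : qc A i i < 1 := inv_diag_lt1 iM.
Let d_gt0 : 0 < (1 - qc A i i)^-1 := revise_pivot_gt0 qc_ii_lt1.
Local Notation A' := (reviseA b A M i).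
Local Notation r' := (reviser b A rt M i).

Lemma revise_ge0 j p : j \in M :\ i -> p \in M :\ i -> b j = b p -> 0 <= qc A' j p.
Proof.
rewrite !in_setD1 => /andP[ji jM] /andP[pi pM] bjp.
have [bj|bj] := eqVneq (b j) (b i); last first.
  by rewrite reviseA_other ?(inv_ge0 I) // (negPf bj) andbF.
rewrite reviseA_elim // reviseA_pivot // addr_ge0 ?(inv_ge0 I) //.
by rewrite !mulr_ge0 ?(inv_ge0 I) ?(ltW d_gt0) // -bjp.
Qed.

Lemma revise_out0 j p : j \in M :\ i -> p \notin M :\ i -> b p = b j -> qc A' j p = 0.
Proof.
rewrite !in_setD1 => /andP[ji jM]; rewrite negb_and negbK => pM' bpj.
have [bj|bj] := eqVneq (b j) (b i); last first.
  have pi : p != i by apply: contraNneq bj => e; rewrite -bpj e.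
  rewrite reviseA_other ?(negPf bj) ?andbF //; apply: (inv_out0 I) => //.
  by move: pM'; rewrite (negPf pi).
have [->|pi] := eqVneq p i; first exact: reviseA_col0.
rewrite (negPf pi) /= in pM'.
rewrite reviseA_elim // reviseA_pivot // (inv_out0 I jM pM' bpj).
by rewrite (inv_out0 I iM pM' (etrans bpj bj)) mul0r mulr0 addr0.
Qed.

Lemma revise_excessive j : j \in M :\ i ->
  \sum_(p | (p \in M :\ i) && (b p == b j)) qc A' j p * w p < w j.
Proof.
rewrite in_setD1 => /andP[ji jM].
have [bj|bj] := eqVneq (b j) (b i); last first.
  rewrite bandit_sum_setD1 //.
  under eq_bigr => p _ do rewrite reviseA_other ?(negPf bj) ?andbF //.
  exact: (inv_excessive I jM).
have d_gt0' := d_gt0; set d := (1 - qc A i i)^-1 in d_gt0' *.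
set Si := \sum_(p | (p \in M :\ i) && (b p == b i)) qc A i p * w p.
set Sj := \sum_(p | (p \in M :\ i) && (b p == b i)) qc A j p * w p.
have -> : \sum_(p | (p \in M :\ i) && (b p == b j)) qc A' j p * w p =
          Sj + qc A j i * d * Si.
  rewrite bj big_distrr -big_split /=; apply: eq_bigr => p /andP[].
  by rewrite in_setD1 => /andP[pi _] _; rewrite reviseA_elim // reviseA_pivot // -/d; ring.
have := inv_excessive I jM; rewrite bj bandit_sumD1 // -/Sj => j_exc.
have := inv_excessive I iM; rewrite bandit_sumD1 // -/Si => i_exc.
have dSi : d * Si <= w i.
  rewrite -[w i](mul1r) -(revise_pivotK qc_ii_lt1) -/d -mulrA ler_wpM2l ?ltW //.
  lra.
have qji : 0 <= qc A j i by apply: (inv_ge0 I).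
have := ler_wpM2l qji dSi; rewrite mulrA; lra.
Qed.

Lemma revise_admissible j : j \in M :\ i -> admissible H (amp b A' j) (r' j).
Proof.
rewrite in_setD1 => /andP[ji jM].
have [bj|bj] := eqVneq (b j) (b i); last first.
  by rewrite amp_reviseA_other_bandit // reviser_other_bandit //; apply: (inv_admissible I).
have qji : 0 <= qc A j i by apply: (inv_ge0 I).
have := inv_admissible I jM; have := inv_admissible I iM.
case: H => /= adm_i adm_j.
- rewrite amp_reviseA_row //.
  have : 0 <= qc A j i * (1 - qc A i i)^-1 * (1 - amp b A i).
    by rewrite !mulr_ge0 ?(ltW d_gt0) // subr_ge0.
  lra.
- rewrite reviser_row // reviser_pivot.
  have : qc A j i * (rt i * (1 - qc A i i)^-1) <= 0.
    by rewrite mulr_ge0_le0 // mulr_le0_ge0 // (ltW d_gt0).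
  lra.
- rewrite reviser_row // reviser_pivot.
  have : 0 <= qc A j i * (rt i * (1 - qc A i i)^-1) by rewrite !mulr_ge0 // (ltW d_gt0).
  lra.
Qed.

Lemma revise_best k : (exists j, j \in M :\ i /\ b j = k) -> exists t, [/\ t \in C', b t = k &
  forall j, j \in M :\ i -> b j = k -> j != t -> wpref b H A' r' t j].
Proof.
move=> [j [jM' bjk]].
have [ek|ki] := eqVneq k (b i).
  case: C'_next => [[no_j _]|[i' [i'M bi' i'_best ->]]].
    by exfalso; apply: no_j; exists j; rewrite bjk ek.
  exists i'; split; rewrite ?in_setU1 ?eqxx ?ek //.
have jM : j \in M by move: jM'; rewrite in_setD1 => /andP[].
have [t [tC btk t_best]] := inv_best I (ex_intro _ j (conj jM bjk)).
have ti : t != i by apply: contraNneq ki => e; rewrite -btk e.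
have tC' : t \in C'.
  by case: C'_next => [[_ ->]|[i' [_ _ _ ->]]]; rewrite ?in_setU1 in_setD1 ti tC ?orbT.
exists t; split => // j0; rewrite in_setD1 => /andP[_ j0M] bj0 j0t.
have bt : b t != b i by rewrite btk.
have bj0' : b j0 != b i by rewrite bj0.
rewrite wprefE !amp_reviseA_other_bandit // !reviser_other_bandit // -wprefE.
exact: t_best.
Qed.

Lemma opt_inv_step : opt_inv A' r' (M :\ i) C' (rcons lab i).
Proof.
split.
- exact: revise_ge0.
- exact: revise_out0.
- exact: revise_excessive.
- exact: revise_admissible.
- exact: revise_best.
- move=> x; case: C'_next => [[_ ->]|[i' [i'M _ _ ->]]].
    by rewrite !in_setD1 => /andP[-> /(inv_CM I) ->].
  by rewrite in_setU1 => /orP[/eqP -> //|]; rewrite !in_setD1 => /andP[-> /(inv_CM I) ->].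
- move=> x; rewrite mem_rcons in_cons in_setD1 => /orP[/eqP ->|xl].
    by rewrite eqxx.
  by rewrite (negPf (inv_lab I xl)) andbF.
- rewrite rcons_uniq (inv_uniq I) andbT; apply/negP => /(inv_lab I).
  by rewrite iM.
Qed.

End Step.

End Invariant.

Hypothesis q_ge0 : forall i j, b i = b j -> 0 <= q i j.
Hypothesis w_excessive : forall i, \sum_(j | b j == b i) q i j * w j < w i.
Hypothesis H_holds : hyp_holds b q r H.

Lemma opt_inv_init C : init_C b q r H C -> opt_inv (A0 b q) r setT C [::].
Proof.
move=> C_init; split => //.
- by move=> j p _ _ bjp; rewrite qcur_A0 // q_ge0.
- by move=> j p _; rewrite in_setT.
- move=> j _; rewrite (eq_big (fun p => b p == b j) (fun p => q j p * w p)) //.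
    by move=> p; rewrite in_setT.
  by move=> p /andP[_ /eqP bp]; rewrite qcur_A0.
- move=> j _; case: H H_holds => /= H_j; [|exact: H_j j|exact: H_j j].
  by rewrite /amp (eq_bigr (q j)) ?H_j // => p /eqP bp; rewrite qcur_A0.
- move=> k _; have [t [btk Ck t_best]] := C_init k.
  exists t; split => //; last by move=> j _; exact: t_best.
  have : t \in [set j in C | b j == k] by rewrite Ck in_set1.
  by rewrite inE => /andP[].
Qed.

Lemma opt_reach_inv A rt M C lab : opt_reach b q r H A rt M C lab -> opt_inv A rt M C lab.
Proof.
elim => [C0 C0_init|A1 rt1 M1 C1 lab1 i C' _ IH _ iC _ C'_next].
  exact: opt_inv_init.
exact: (opt_inv_step IH iC C'_next).
Qed.

End OptimizerInvariant.

Section ReducedProblem.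
Variables (R : realFieldType) (K : nat) (T : finType) (b : T -> 'I_K).
Variable pi : policy b.
Local Notation mstate := (mstate b).
Local Notation qc := (@qcur R T).
Implicit Types (s : mstate) (M : {set T}) (U : mstate -> R).

Definition opt_rhs (A : T -> T -> R) (rt : T -> R) M U s k : R :=
  rt (val s k) + \sum_(j | (j \in M) && (b j == k)) qc A (val s k) j * U (mupd s k j).

Definition mstate_in M s := [forall k, val s k \in M].

Definition opt_solvable (A : T -> T -> R) (rt : T -> R) M : Prop :=
  exists U, forall s, mstate_in M s ->
    U s = opt_rhs A rt M U s (pi s) /\ forall k, opt_rhs A rt M U s k <= U s.

Lemma mstate_in_mupd_pivot M s i j : mstate_in M s -> val s (b i) = i ->
  b j = b i -> j \in M :\ i -> mstate_in (M :\ i) (mupd s (b i) j).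
Proof.
move=> /forallP s_in si bj jM'; apply/forallP => k.
have [->|ki] := eqVneq k (b i); first by rewrite mupd_at.
rewrite mupd_other // in_setD1 s_in andbT; apply: contra_neq ki => e.
by rewrite -[k](mstate_bandit s k) e.
Qed.

Lemma mstate_in_setD1 M s i : mstate_in M s -> val s (b i) != i -> mstate_in (M :\ i) s.
Proof.
move=> /forallP s_in si; apply/forallP => k; rewrite in_setD1 s_in andbT.
have [->//|ki] := eqVneq k (b i).
by apply: contraNneq ki => e; rewrite -[k](mstate_bandit s k) e.
Qed.

Lemma opt_rhs_revise_other (A : T -> T -> R) (rt : T -> R) M i U s k : k != b i ->
  opt_rhs (reviseA b A M i) (reviser b A rt M i) (M :\ i) U s k = opt_rhs A rt M U s k.
Proof.
move=> ki; have bx : b (val s k) != b i by rewrite mstate_bandit.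
rewrite /opt_rhs reviser_other_bandit // bandit_sum_setD1 //; congr (_ + _).
apply: eq_bigr => j _; rewrite reviseA_other //; last by rewrite (negPf bx) andbF.
by apply: contraNneq bx => ->.
Qed.

Lemma opt_final_solvable (A : T -> T -> R) (rt : T -> R) M :
  opt_final b M -> opt_solvable A rt M.
Proof.
move=> [k k_out]; exists (fun=> 0) => s /forallP /(_ k).
by rewrite (negPf (k_out _ (mstate_bandit s k))).
Qed.

Lemma opt_rhs_A0 (q : T -> T -> R) (r : T -> R) U (d : policy b) s :
  opt_rhs (A0 b q) r setT U s (d s) = r (val s (d s)) + \sum_t Qfun q d s t * U t.
Proof.
rewrite Qfun_sumE /opt_rhs; congr (_ + _).
apply: eq_big => [j|j /andP[_ /eqP bj]]; first by rewrite in_setT.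
by rewrite qcur_A0 // mstate_bandit.
Qed.

End ReducedProblem.

Section BackwardStep.
Variables (R : realFieldType) (K : nat) (T : finType) (b : T -> 'I_K).
Variables (H : hyp) (w : T -> R) (pi : policy b).
Hypothesis w_gt0 : forall i, 0 < w i.
Local Notation mstate := (mstate b).
Local Notation qc := (@qcur R T).
Implicit Types (s : mstate) (k : 'I_K).

Variables (A : T -> T -> R) (rt : T -> R) (M C : {set T}) (lab : seq T) (i : T).
Hypotheses (I : opt_inv b H w A rt M C lab) (iC : i \in C).
Hypothesis i_best : forall j, j \in C -> j != i -> wpref b H A rt i j.
Hypothesis pi_i : forall s, mstate_in M s -> val s (b i) = i -> pi s = b i.
Local Notation A' := (reviseA b A M i).
Local Notation r' := (reviser b A rt M i).
Local Notation M' := (M :\ i).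
Let iM : i \in M := inv_CM I iC.
Let qc_ii_lt1 : qc A i i < 1 := inv_diag_lt1 w_gt0 I iM.
Let d := (1 - qc A i i)^-1.
Let d_gt0 : 0 < d := revise_pivot_gt0 qc_ii_lt1.

Lemma pivot_pref_gap_ge0 x : x \in M -> b x != b i ->
  0 <= pref_gap (amp b A i) (rt i) (amp b A x) (rt x).
Proof.
move=> xM bx.
have [t [tC btx t_best]] := inv_best I (ex_intro _ x (conj xM erefl)).
have ti : t != i by apply: contraNneq bx => e; rewrite -btx e.
have i_t := i_best tC ti; rewrite wprefE in i_t.
have [->|xt] := eqVneq x t; first exact: pref_gap_ge0 i_t.
have t_x := t_best x xM erefl xt; rewrite wprefE in t_x.
exact: (pref_gap_trans (inv_admissible I iM) (inv_admissible I (inv_CM I tC))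
                       (inv_admissible I xM) i_t t_x).
Qed.

(* Interchange argument: passing through [i] before a state of another bandit
   with data [(a, r)] rather than after it gains [d] times the preference gap. *)
Lemma pivot_gainE a r :
  r' i + (\sum_(p | (p \in M') && (b p == b i)) qc A' i p) * r - (r + r' i * a) =
  d * pref_gap (amp b A i) (rt i) a r.
Proof.
have -> : \sum_(p | (p \in M') && (b p == b i)) qc A' i p =
          (\sum_(p | (p \in M') && (b p == b i)) qc A i p) * d.
  rewrite mulr_suml; apply: eq_bigr => p /andP[]; rewrite in_setD1.
  by move=> /andP[p_i _] _; rewrite reviseA_pivot.
have := revise_pivotK qc_ii_lt1; rewrite -/d => dK.
rewrite reviser_pivot -/d (inv_ampE I iM) (bandit_sumD1 b (qc A i) iM) /pref_gap.
transitivity (d * (rt i + (qc A i i + \sum_(p | (p \in M') && (b p == b i)) qc A i p) * r -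
                    (r + a * rt i)) - r * (1 - d * (1 - qc A i i))); last first.
  by rewrite dK subrr mulr0 subr0.
ring.
Qed.

Section Lift.
Variable U' : mstate -> R.
Hypothesis U'_solves : forall s, mstate_in M' s ->
  U' s = opt_rhs A' r' M' U' s (pi s) /\ forall k, opt_rhs A' r' M' U' s k <= U' s.

Definition lift_value (s : mstate) : R :=
  if val s (b i) == i then opt_rhs A' r' M' U' s (b i) else U' s.

Lemma lift_value_off s : val s (b i) != i -> lift_value s = U' s.
Proof. by rewrite /lift_value => /negPf ->. Qed.

Lemma lift_value_at s : val s (b i) = i -> lift_value s =
  r' i + \sum_(p | (p \in M') && (b p == b i)) qc A' i p * U' (mupd s (b i) p).
Proof. by move=> si; rewrite /lift_value si eqxx /opt_rhs si. Qed.

Lemma opt_rhs_lift_pivot s : val s (b i) = i ->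
  opt_rhs A rt M lift_value s (b i) = lift_value s.
Proof.
move=> si; set Z := \sum_(p | (p \in M') && (b p == b i)) qc A i p * U' (mupd s (b i) p).
have lift_s : lift_value s = d * (rt i + Z).
  rewrite lift_value_at // reviser_pivot -/d mulrDr mulr_sumr mulrC; congr (_ + _).
  apply: eq_bigr => p /andP[]; rewrite in_setD1 => /andP[p_i _] _.
  by rewrite reviseA_pivot // -/d; ring.
rewrite /opt_rhs si (bandit_sumD1 b _ iM).
have -> : mupd s (b i) i = s by rewrite -{2}si mupd_id.
have -> : \sum_(p | (p \in M') && (b p == b i)) qc A i p * lift_value (mupd s (b i) p) = Z.
  apply: eq_bigr => p /andP[]; rewrite in_setD1 => /andP[p_i _] /eqP bp.
  by rewrite lift_value_off ?mupd_at.
have dK := revise_pivotK qc_ii_lt1; rewrite -/d in dK.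
apply/eqP; rewrite lift_s -subr_eq0; apply/eqP.
transitivity ((rt i + Z) * (1 - d * (1 - qc A i i))); first ring.
by rewrite dK subrr mulr0.
Qed.

Lemma opt_rhs_lift_other s k : val s (b i) = i -> k != b i ->
  opt_rhs A rt M lift_value s k =
  rt (val s k) + r' i * \sum_(j | (j \in M) && (b j == k)) qc A (val s k) j +
  \sum_(p | (p \in M') && (b p == b i)) qc A' i p *
    (opt_rhs A rt M U' (mupd s (b i) p) k - rt (val s k)).
Proof.
move=> si ki; rewrite /opt_rhs -addrA; congr (_ + _).
under [X in _ = _ + X]eq_bigr => p /andP[_ /eqP bp] do
  rewrite mupd_other // addrC addKr mulr_sumr.
rewrite exchange_big mulr_sumr -big_split /=; apply: eq_bigr => j /andP[_ /eqP bj].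
rewrite lift_value_at; last by rewrite mupd_other // eq_sym.
rewrite mulrDr mulr_sumr mulrC; congr (_ + _).
by apply: eq_bigr => p /andP[_ /eqP bp]; rewrite mupdC //; ring.
Qed.

Lemma opt_rhs_lift_other_le s k : mstate_in M s -> val s (b i) = i -> k != b i ->
  opt_rhs A rt M lift_value s k <= lift_value s.
Proof.
move=> s_in si ki; set x := val s k.
have xM : x \in M := forallP s_in k.
have bx : b x != b i by rewrite mstate_bandit.
have R_le p : p \in M' -> b p == b i ->
    opt_rhs A rt M U' (mupd s (b i) p) k <= U' (mupd s (b i) p).
  move=> pM' /eqP bp; rewrite -(opt_rhs_revise_other _ _ _ _ _ ki).
  exact: (U'_solves (mstate_in_mupd_pivot s_in si bp pM')).2.
have a'_ge0 p : p \in M' -> b p == b i -> 0 <= qc A' i p.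
  rewrite in_setD1 => /andP[p_i pM] /eqP bp; rewrite reviseA_pivot //.
  by rewrite mulr_ge0 ?(inv_ge0 I) ?(ltW d_gt0).
have sum_le : \sum_(p | (p \in M') && (b p == b i)) qc A' i p *
    (opt_rhs A rt M U' (mupd s (b i) p) k - rt x) <=
  \sum_(p | (p \in M') && (b p == b i)) qc A' i p * U' (mupd s (b i) p) -
  (\sum_(p | (p \in M') && (b p == b i)) qc A' i p) * rt x.
  rewrite mulr_suml -sumrB; apply: ler_sum => p /andP[pM' bp].
  by rewrite -mulrBr ler_wpM2l ?a'_ge0 // lerD2r R_le.
have gap_ge0 := mulr_ge0 (ltW d_gt0) (pivot_pref_gap_ge0 xM bx).
have ampx : \sum_(j | (j \in M) && (b j == k)) qc A x j = amp b A x.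
  by rewrite (inv_ampE I xM) mstate_bandit.
have := pivot_gainE (amp b A x) (rt x).
rewrite opt_rhs_lift_other // lift_value_at // -/x ampx.
lra.
Qed.

Lemma opt_rhs_lift_off s k : mstate_in M s -> val s (b i) != i ->
  opt_rhs A rt M lift_value s k = opt_rhs A' r' M' U' s k.
Proof.
move=> s_in si; have [->|ki] := eqVneq k (b i); last first.
  rewrite opt_rhs_revise_other //; congr (_ + _); apply: eq_bigr => j /andP[_ /eqP bj].
  by rewrite lift_value_off // mupd_other // eq_sym.
set x := val s (b i).
have xM : x \in M := forallP s_in (b i).
have bx : b x = b i by rewrite mstate_bandit.
rewrite /opt_rhs -/x reviser_row // (bandit_sumD1 b _ iM).
rewrite lift_value_at ?mupd_at //.
under eq_bigr => p /andP[_ /eqP bp] do rewrite mupd_mupd //.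
have -> : \sum_(p | (p \in M') && (b p == b i)) qc A x p * lift_value (mupd s (b i) p) =
    \sum_(p | (p \in M') && (b p == b i)) qc A x p * U' (mupd s (b i) p).
  apply: eq_bigr => p /andP[]; rewrite in_setD1 => /andP[p_i _] /eqP bp.
  by rewrite lift_value_off ?mupd_at.
have -> : \sum_(p | (p \in M') && (b p == b i)) qc A' x p * U' (mupd s (b i) p) =
    \sum_(p | (p \in M') && (b p == b i)) qc A x p * U' (mupd s (b i) p) +
    qc A x i * \sum_(p | (p \in M') && (b p == b i)) qc A' i p * U' (mupd s (b i) p).
  rewrite mulr_sumr -big_split /=; apply: eq_bigr => p /andP[]; rewrite in_setD1.
  by move=> /andP[p_i _] _; rewrite reviseA_elim //; ring.
ring.
Qed.

Lemma lift_value_solves s : mstate_in M s ->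
  lift_value s = opt_rhs A rt M lift_value s (pi s) /\
  forall k, opt_rhs A rt M lift_value s k <= lift_value s.
Proof.
move=> s_in; have [si|si] := eqVneq (val s (b i)) i.
  rewrite (pi_i s_in si) opt_rhs_lift_pivot //; split => // k.
  have [->|ki] := eqVneq k (b i); first by rewrite opt_rhs_lift_pivot.
  exact: opt_rhs_lift_other_le.
have [U'_eq U'_le] := U'_solves (mstate_in_setD1 s_in si).
by rewrite lift_value_off //; split => [|k]; rewrite opt_rhs_lift_off.
Qed.

End Lift.

Lemma opt_solvable_back : opt_solvable pi A' r' M' -> opt_solvable pi A rt M.
Proof. by move=> [U' U'_solves]; exists (lift_value U'); apply: lift_value_solves. Qed.

End BackwardStep.

Lemma label_next_lt (T : finType) (L : option T -> nat) (labF lab fut : seq T) (i j : T) :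
  labeling L -> uniq labF ->
  (forall x, x \in labF -> L (Some x) = (index x labF).+1) ->
  lab ++ i :: fut = labF -> i \notin lab -> j \notin lab -> j != i ->
  (L (Some i) < L (Some j))%N.
Proof.
move=> [L_inj L_range _] labF_uniq L_index labFE il jl ji.
have Li : L (Some i) = (size lab).+1.
  by rewrite L_index -labFE ?index_cat ?(negPf il) /= ?eqxx ?addn0 // mem_cat mem_head orbT.
rewrite Li; have [jF|jF] := boolP (j \in labF).
  rewrite L_index // -labFE index_cat (negPf jl) /= eq_sym (negPf ji) addnS.
  by rewrite !ltnS leq_addr.
(* otherwise [L (Some j)] would be the label of the [L (Some j)]-th state of [labF] *)
rewrite ltnNge; apply/negP => Lj_le.
have size_lt : (size lab < size labF)%N by rewrite -labFE size_cat /= addnS ltnS leq_addr.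
have /andP[Lj_gt0 _] := L_range (Some j).
set m := (L (Some j)).-1.
have m_lt : (m < size labF)%N.
  by rewrite /m; apply: leq_ltn_trans size_lt; rewrite -ltnS prednK.
have yF : nth i labF m \in labF by exact: mem_nth.
have := L_index _ yF; rewrite index_uniq // /m prednK // => /L_inj [ej].
by move: jF; rewrite -ej yF.
Qed.

Section Optimality.
Variables (R : realFieldType) (K : nat) (T : finType) (b : T -> 'I_K).
Variables (q : T -> T -> R) (r : T -> R) (H : hyp) (w : T -> R).
Hypothesis q_ge0 : forall i j, b i = b j -> 0 <= q i j.
Hypothesis w_gt0 : forall i, 0 < w i.
Hypothesis w_excessive : forall i, \sum_(j | b j == b i) q i j * w j < w i.
Hypothesis H_holds : hyp_holds b q r H.
Variables (pi : policy b) (L : option T -> nat) (labF : seq T).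
Hypotheses (L_labeling : labeling L) (labF_uniq : uniq labF).
Hypothesis L_index : forall x, x \in labF -> L (Some x) = (index x labF).+1.
Hypothesis pi_priority : priority_rule L pi.

Lemma opt_reach_solvable A rt M C lab : opt_reach b q r H A rt M C lab ->
  forall fut, lab ++ fut = labF -> opt_solvable pi A rt M -> opt_solvable pi (A0 b q) r setT.
Proof.
elim => [//|A1 rt1 M1 C1 lab1 i C' reach IH _ iC i_best _] fut labFE solvable.
have I := opt_reach_inv w_gt0 q_ge0 w_excessive H_holds reach.
apply: (IH (i :: fut)); first by rewrite -cat_rcons.
apply: (opt_solvable_back w_gt0 I iC i_best) => // s s_in si.
have [//|pis] := eqVneq (pi s) (b i); exfalso.
have := pi_priority s (b i); rewrite si leqNgt => /negP; apply.
have iM : i \in M1 := inv_CM I iC.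
have sM : val s (pi s) \in M1 := forallP s_in (pi s).
apply: (label_next_lt L_labeling labF_uniq L_index (lab := lab1) (fut := fut)).
- by rewrite -cat_rcons.
- by apply/negP => /(inv_lab I); rewrite iM.
- by apply/negP => /(inv_lab I); rewrite sM.
- by apply: contra pis => /eqP <-; rewrite mstate_bandit.
Qed.

Lemma V_eq_F_of_solvable : opt_solvable pi (A0 b q) r setT -> forall s, V q r pi s = F q r s.
Proof.
move=> [U U_solves] s.
have s_in (t : mstate b) : mstate_in [set: T] t by apply/forallP => k; rewrite in_setT.
have U_super (d : policy b) (t : mstate b) :
    r (val t (d t)) + \sum_u Qfun q d t u * U u <= U t.
  by rewrite -opt_rhs_A0; apply: (U_solves t (s_in t)).2.
have V_pi (t : mstate b) : V q r pi t = U t.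
  apply: (V_fixpoint q_ge0 w_gt0 w_excessive) => u.
  by rewrite -opt_rhs_A0; apply: (U_solves u (s_in u)).1.
apply/eqP; rewrite eq_le V_le_F /=.
have [d ->] := F_attained q r pi s.
by rewrite V_pi (V_le_super q_ge0 w_gt0 w_excessive).
Qed.

End Optimality.

Theorem proposition6p1 (R : realFieldType) (K : nat) (T : finType)
  (b : T -> 'I_K) (q : T -> T -> R) (r : T -> R) (H : hyp) :
  (forall k : 'I_K, exists j, b j = k) ->
  hypC_base b q ->
  hyp_holds b q r H ->
  forall (Atab : T -> T -> R) (rtab : T -> R) (M C : {set T}) (lab : seq T),
  opt_reach b q r H Atab rtab M C lab ->
  opt_final b M ->
  forall L : option T -> nat,
  labeling L ->
  (forall j, j \in lab -> L (Some j) = (index j lab).+1) ->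
  forall pi : policy b,
  priority_rule L pi ->
  forall s : mstate b, V q r pi s = F q r s.
Proof.
move=> _ hypC H_holds A rt M C lab reach final L L_labeling L_index pi pi_priority.
have [q_ge0 _] := hypC.
have [w [w_gt0 w_excessive]] := hypC_excessive_weight hypC.
have I := opt_reach_inv w_gt0 q_ge0 w_excessive H_holds reach.
apply: (V_eq_F_of_solvable q_ge0 w_gt0 w_excessive).
apply: (opt_reach_solvable q_ge0 w_gt0 w_excessive H_holds L_labeling (inv_uniq I)
          L_index pi_priority reach (cats0 lab)).
exact: opt_final_solvable.
Qed.
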